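(* Let $k,l,N$ be positive integers and let $\mu_0,\dots,\mu_N$ be proper distributions on $\mathbb{T}^2$. Then the system $$-\partial_1^k\varphi_1=\mu_0,\qquad \partial_2^l\varphi_j-\partial_1^k\varphi_{j+1}=\mu_j\ (j=1,\dots,N-1),\qquad \partial_2^l\varphi_N=\mu_N$$ admits a solution in proper distributions $\varphi_1,\dots,\varphi_N$ if and only if $$\sum_{j=0}^N\partial_1^{jk}\partial_2^{(N-j)l}\mu_j=0.$$ Moreover, if this condition holds, the solution in proper distributions is unique.
   Context: The torus is parametrised by $t\mapsto e^{2\pi it}$; $\partial_1,\partial_2$ are derivatives in the parameters; Fourier coefficients are $\hat f(m,n)$, $(m,n)\in\mathbb{Z}^2$. A distribution $f$ on $\mathbb{T}^2$ is proper if $\hat f(s,t)=0$ whenever $s=0$ or $t=0$. *)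

From HB Require Import structures.
From mathcomp Require Import all_boot all_order all_algebra.
From mathcomp Require Import reals trigo.
From mathcomp Require Import complex.
Set Implicit Arguments. Unset Strict Implicit. Unset Printing Implicit Defensive.
Import Order.TTheory GRing.Theory Num.Theory.
Local Open Scope ring_scope.
Local Open Scope complex_scope.

(* A distribution f on T^2 = R^2/Z^2 (torus parametrised by t |-> e^{2 pi i t})
   is identified with its family of Fourier coefficients  hat f : Z^2 -> C,
   which is exactly a sequence of at most polynomial growth. *)
Definition fcoef (R : realType) := int -> int -> R[i].

Definition is_distr (R : realType) (f : fcoef R) : Prop :=
  exists (c : R) (M : nat), forall m n : int,
    `|f m n| <= (c%:C * ((1 + `|m| + `|n|)%:~R) ^+ M)%R.

Definition proper (R : realType) (f : fcoef R) : Prop :=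
  forall m n : int, (m = 0 \/ n = 0) -> f m n = 0.

Definition d1 (R : realType) (k : nat) (f : fcoef R) : fcoef R :=
  fun m n => ((2 * pi)%:C * 'i * m%:~R) ^+ k * f m n.
Definition d2 (R : realType) (k : nat) (f : fcoef R) : fcoef R :=
  fun m n => ((2 * pi)%:C * 'i * n%:~R) ^+ k * f m n.

Definition proper_distr (R : realType) (f : fcoef R) : Prop :=
  is_distr f /\ proper f.

Definition solves (R : realType) (k l N : nat) (mu phi : nat -> fcoef R) : Prop :=
  [/\ (forall m n, - d1 k (phi 1%N) m n = mu 0%N m n),
      (forall j, (1 <= j)%N -> (j <= N - 1)%N ->
         forall m n, d2 l (phi j) m n - d1 k (phi j.+1) m n = mu j m n) &
      (forall m n, d2 l (phi N) m n = mu N m n)].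

Definition compat (R : realType) (k l N : nat) (mu : nat -> fcoef R) : Prop :=
  forall m n, \sum_(j < N.+1) d1 (j * k) (d2 ((N - j) * l) (mu j)) m n = 0.

From mathcomp Require Import all_boot all_order all_algebra.
From mathcomp Require Import boolp reals trigo complex.
From mathcomp Require Import ring lra zify.
Set Implicit Arguments. Unset Strict Implicit. Unset Printing Implicit Defensive.
Import Order.TTheory GRing.Theory Num.Theory.
Local Open Scope ring_scope.

(* At a fixed frequency (m, n), with a and b the Fourier symbols of d_1^k and
   d_2^l, the system reads  -a f_1 = mu_0,  b f_j - a f_(j+1) = mu_j,
   b f_N = mu_N.  Weighting the j-th equation by a^j b^(N-j) makes the sum
   telescope to 0, which is the compatibility condition.  Conversely, for
   m <> 0 the symbol a is invertible, so the first N equations determine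
   f_1, ..., f_N by forward recursion, and compatibility is exactly the last
   equation; since |a| >= 1 the recursion preserves polynomial growth.  For
   m = 0 properness makes every quantity vanish. *)

Section Chain.
Variable F : comNzRingType.
Implicit Types (a b : F) (mu f : nat -> F).

Definition chain_system a b N mu f : Prop :=
  [/\ - (a * f 1%N) = mu 0%N,
      forall j, (1 <= j)%N -> (j <= N - 1)%N -> b * f j - a * f j.+1 = mu j &
      b * f N = mu N].

Lemma sum_chain_telescope a b N mu f :
  (forall j, (j < N)%N -> mu j = b * f j - a * f j.+1) ->
  \sum_(j < N) a ^+ j * b ^+ (N - j) * mu j = b ^+ N.+1 * f 0%N - a ^+ N * b * f N.
Proof.
move=> hmu; pose g j := - (a ^+ j * b ^+ (N - j).+1 * f j).
rewrite -(big_mkord xpredT (fun j => a ^+ j * b ^+ (N - j) * mu j)) /=.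
rewrite (telescope_sumr_eq g) // => [|j /andP[_ jN]].
  by rewrite /g subn0 subnn expr0 expr1 opprK addrC; ring.
by rewrite /g hmu // -(subnSK jN) !exprS; ring.
Qed.

Lemma chain_system_compat a b N mu f : (0 < N)%N ->
  chain_system a b N mu f -> \sum_(j < N.+1) a ^+ j * b ^+ (N - j) * mu j = 0.
Proof.
(* With f_0 := 0 the first equation is one more instance of the recurrence. *)
move=> N0 [h0 hj hN]; pose g j := if j is 0 then 0 else f j.
rewrite big_ord_recr /= (@sum_chain_telescope _ _ _ _ g).
  by rewrite subnn expr0 mulr1 -hN /g; case: N N0 {hj hN} => // N _; ring.
by case=> [_|j jN]; rewrite /g ?mulr0 ?sub0r ?hj //; lia.
Qed.

End Chain.

Section ChainField.
Variable F : fieldType.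
Implicit Types (a b : F) (mu f : nat -> F).

Fixpoint chain_rec a b mu j : F :=
  if j is i.+1 then (b * chain_rec a b mu i - mu i) / a else 0.

Lemma chain_recS a b mu j :
  chain_rec a b mu j.+1 = (b * chain_rec a b mu j - mu j) / a.
Proof. by []. Qed.

Lemma chain_rec_eq0 a b mu j :
  (forall i, (i < j)%N -> mu i = 0) -> chain_rec a b mu j = 0.
Proof.
elim: j => [//|j IH] mu0 /=.
by rewrite IH => [|i ij]; rewrite ?mu0 ?mulr0 ?subr0 ?mul0r //; lia.
Qed.

Lemma chain_rec_system a b N mu : (0 < N)%N ->
  \sum_(j < N.+1) a ^+ j * b ^+ (N - j) * mu j = 0 ->
  (a = 0 -> forall j, (j <= N)%N -> mu j = 0) ->
  chain_system a b N mu (chain_rec a b mu).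
Proof.
move=> N0 hc; have [-> /(_ erefl) mu0|a0 _] := eqVneq a 0.
  have f0 j : (j <= N.+1)%N -> chain_rec 0 b mu j = 0.
    by move=> jN; apply: chain_rec_eq0 => i ij; apply: mu0; lia.
  split=> [|j j1 jN|]; rewrite ?f0 ?mu0 ?mulr0 ?subr0 ?oppr0 //; lia.
have step j : a * chain_rec a b mu j.+1 = b * chain_rec a b mu j - mu j.
  by rewrite chain_recS mulrC divfK.
split=> [|j _ _|]; first by rewrite step /= mulr0 sub0r opprK.
  by rewrite step opprB addrC subrK.
move: hc; rewrite big_ord_recr /= (@sum_chain_telescope _ a b _ _ (chain_rec a b mu));
  last by move=> j _; rewrite step opprB addrC subrK.
rewrite /= subnn expr0 mulr1 mulr0 sub0r -mulrA addrC -mulrBr => /eqP.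
by rewrite mulf_eq0 expf_eq0 (negPf a0) andbF /= subr_eq0 => /eqP.
Qed.

Lemma chain_system_rec a b N mu f : a != 0 -> chain_system a b N mu f ->
  forall j, (1 <= j)%N -> (j <= N)%N -> f j = chain_rec a b mu j.
Proof.
move=> a0 [h0 hj _]; elim=> [//|[_ _ _|j IH _ jN]]; rewrite chain_recS.
  by rewrite mulr0 sub0r -h0 opprK (mulrC a) mulfK.
rewrite -IH ?(ltnW jN) // -hj //; last by lia.
by rewrite opprB addrC subrK (mulrC a) mulfK.
Qed.

End ChainField.

Section FourierCoefficients.
Variable R : realType.
Implicit Types (f g : fcoef R) (mu phi : nat -> fcoef R) (m n x : int).

Definition dsymbol x : R[i] := ((2 * pi)%:C * 'i * x%:~R)%C.

Definition weight m n : R[i] := (1 + `|m| + `|n|)%:~R.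

Lemma weight_ge1 m n : 1 <= weight m n.
Proof. by rewrite /weight ler1z -addrA lerDl addr_ge0. Qed.

Lemma is_distr_ge0 f : is_distr f ->
  exists c M, 0 <= c /\ forall m n, `|f m n| <= c%:C%C * weight m n ^+ M.
Proof.
move=> [c [M h]]; exists c, M; split => //.
have := le_trans (normr_ge0 _) (h 0 0).
by rewrite !normr0 !addr0 expr1n mulr1 ler0c.
Qed.

Lemma weight_bound_expn (c : R) M M' m n (y : R[i]) : 0 <= c -> (M <= M')%N ->
  y <= c%:C%C * weight m n ^+ M -> y <= c%:C%C * weight m n ^+ M'.
Proof.
move=> c0 MM' /le_trans; apply; have w1 := weight_ge1 m n.
apply: ler_pM; rewrite ?lecR ?ler0c ?exprn_ge0 ?ler_weXn2l //.
Qed.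

Lemma is_distr_add f g : is_distr f -> is_distr g ->
  is_distr (fun m n => f m n + g m n).
Proof.
move=> /is_distr_ge0 [c1 [M1 [c10 h1]]] /is_distr_ge0 [c2 [M2 [c20 h2]]].
exists (c1 + c2), (maxn M1 M2) => m n; apply: le_trans (ler_normD _ _) _.
rewrite rmorphD mulrDl lerD //.
  exact: (weight_bound_expn c10 (leq_maxl _ _) (h1 m n)).
exact: (weight_bound_expn c20 (leq_maxr _ _) (h2 m n)).
Qed.

Lemma is_distr_opp f : is_distr f -> is_distr (fun m n => - f m n).
Proof. by move=> [c [M h]]; exists c, M => m n; rewrite normrN. Qed.

Lemma is_distr_mul f g : is_distr f -> is_distr g ->
  is_distr (fun m n => f m n * g m n).
Proof.
move=> /is_distr_ge0 [c1 [M1 [c10 h1]]] /is_distr_ge0 [c2 [M2 [c20 h2]]].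
exists (c1 * c2), (M1 + M2) => m n.
by rewrite normrM rmorphM exprD mulrACA ler_pM.
Qed.

Lemma norm_dsymbol x : `|dsymbol x| = (2 * pi)%:C%C * `|x|%:~R.
Proof.
rewrite /dsymbol !normrM normCi mulr1 -intr_norm normc_def /= expr0n addr0 /=.
by rewrite sqrtr_sqr ger0_norm // mulr_ge0 ?pi_ge0.
Qed.

Lemma two_pi_ge1 : (1 : R[i]) <= (2 * pi)%:C%C.
Proof. by rewrite (_ : 1 = 1%:C%C) // lecR; have := pi_ge2 R; lra. Qed.

Lemma norm_dsymbol_ge1 x : x != 0 -> 1 <= `|dsymbol x|.
Proof.
by move=> x0; rewrite norm_dsymbol mulr_ege1 ?two_pi_ge1 // ler1z -gtz0_ge1 normr_gt0.
Qed.

Lemma dsymbol_eq0 x : (dsymbol x == 0) = (x == 0).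
Proof.
have [->|x0] := eqVneq x 0; first by rewrite /dsymbol mulr0 eqxx.
apply/negbTE; rewrite -normr_eq0; apply: contraTN (norm_dsymbol_ge1 x0) => /eqP->.
by rewrite ler10.
Qed.

Lemma is_distr_dsymbolX2 l : is_distr (fun _ n => dsymbol n ^+ l).
Proof.
exists ((2 * pi) ^+ l), l => m n; rewrite normrX rmorphXn -exprMn.
apply: lerXn2r; rewrite ?nnegrE ?normr_ge0 ?mulr_ge0 ?ler0c ?mulr_ge0 ?pi_ge0 //.
rewrite norm_dsymbol ler_wpM2l ?ler0c ?mulr_ge0 ?pi_ge0 // ler_int.
by rewrite addrC lerDl addr_ge0.
Qed.

Lemma is_distr_inv_dsymbolX1 k : is_distr (fun m _ => (dsymbol m ^+ k)^-1).
Proof.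
exists 1, 0%N => m n; rewrite expr0 mulr1.
have [->|m0] := eqVneq m 0.
  by case: k => [|k]; rewrite /dsymbol mulr0 ?expr0 ?invr1 ?normr1 ?expr0n ?invr0 ?normr0.
have hA : 1 <= `|dsymbol m ^+ k| by rewrite normrX exprn_ege1 ?norm_dsymbol_ge1.
by rewrite normfV invf_le1 // (lt_le_trans ltr01 hA).
Qed.

Lemma solvesP k l N mu phi : solves k l N mu phi <->
  forall m n, chain_system (dsymbol m ^+ k) (dsymbol n ^+ l) N (fun j => mu j m n) (fun j => phi j m n).
Proof.
split=> [[h0 hj hN] m n | h]; first by split=> [|j j1 jN|]; [exact: h0|exact: hj|exact: hN].
by split=> [m n|j j1 jN m n|m n]; have [] := h m n => // _ /(_ j j1 jN).
Qed.

Lemma compatP k l N mu : compat k l N mu <-> forall m n,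
  \sum_(j < N.+1) (dsymbol m ^+ k) ^+ j * (dsymbol n ^+ l) ^+ (N - j) * mu j m n = 0.
Proof.
have E m n : \sum_(j < N.+1) d1 (j * k) (d2 ((N - j) * l) (mu j)) m n =
    \sum_(j < N.+1) (dsymbol m ^+ k) ^+ j * (dsymbol n ^+ l) ^+ (N - j) * mu j m n.
  by apply: eq_bigr => j _; rewrite /d1 /d2 mulrA -!exprM !(mulnC k) !(mulnC l).
by split=> h m n; [rewrite -E | rewrite E]; apply: h.
Qed.

Definition forward_sol k l (mu : nat -> fcoef R) j : fcoef R :=
  fun m n => chain_rec (dsymbol m ^+ k) (dsymbol n ^+ l) (fun j => mu j m n) j.

Lemma forward_sol_proper_distr k l N mu :
  (forall j, (j <= N)%N -> proper_distr (mu j)) ->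
  forall j, (j <= N)%N -> proper_distr (forward_sol k l mu j).
Proof.
move=> hmu j jN; split.
  elim: j jN => [_|j IH jN]; first by exists 0, 0%N => m n; rewrite normr0 mul0r.
  have -> : forward_sol k l mu j.+1 = fun m n =>
      (dsymbol n ^+ l * forward_sol k l mu j m n - mu j m n) * (dsymbol m ^+ k)^-1.
    by [].
  apply: is_distr_mul (is_distr_inv_dsymbolX1 k).
  apply: is_distr_add (is_distr_mul (is_distr_dsymbolX2 l) (IH (ltnW jN))) _.
  exact/is_distr_opp/(hmu j (ltnW jN)).1.
move=> m n mn0; apply: chain_rec_eq0 => i ij.
by apply: (hmu i _).2 mn0; apply: leq_trans (ltnW ij) jN.
Qed.

End FourierCoefficients.

Theorem lemma5 (R : realType) (k l N : nat) (mu : nat -> fcoef R) :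
  (0 < k)%N -> (0 < l)%N -> (0 < N)%N ->
  (forall j, (j <= N)%N -> proper_distr (mu j)) ->
  ((exists phi : nat -> fcoef R,
      (forall j, (1 <= j)%N -> (j <= N)%N -> proper_distr (phi j)) /\
      solves k l N mu phi)
    <-> compat k l N mu) /\
  (compat k l N mu ->
   forall phi psi : nat -> fcoef R,
     (forall j, (1 <= j)%N -> (j <= N)%N -> proper_distr (phi j)) ->
     (forall j, (1 <= j)%N -> (j <= N)%N -> proper_distr (psi j)) ->
     solves k l N mu phi -> solves k l N mu psi ->
     forall j, (1 <= j)%N -> (j <= N)%N -> phi j = psi j).
Proof.
move=> k0 l0 N0 hmu.
have a_neq0 m : m != 0 -> dsymbol R m ^+ k != 0 by move=> m0; rewrite expf_neq0 // dsymbol_eq0.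
split; first split.
- by case=> phi [_ /solvesP sys]; apply/compatP => m n; exact: chain_system_compat N0 (sys m n).
- move=> /compatP hc; exists (forward_sol k l mu); split.
    by move=> j _; apply: forward_sol_proper_distr.
  apply/solvesP => m n; apply: chain_rec_system => // /eqP.
  rewrite expf_eq0 dsymbol_eq0 => /andP[_ /eqP m0] j /hmu[_].
  by apply; left.
- move=> _ phi psi hphi hpsi /solvesP sphi /solvesP spsi j j1 jN.
  apply/funext => m; apply/funext => n; have [m0|m0] := eqVneq m 0.
    by rewrite (hphi j j1 jN).2 ?(hpsi j j1 jN).2 //; left.
  rewrite (chain_system_rec (a_neq0 _ m0) (sphi m n)) //.
  by rewrite (chain_system_rec (a_neq0 _ m0) (spsi m n)).
Qed.
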